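(* Let $n\ge0$, $r\in\mathcal{Y}_n$ and let $\mathsf{R}\subseteq[n]$ be an admissible set of internal nodes of $r$ (nodes labeled in-order). Then $r|_{\mathsf{R}}=r'_{\mathsf{R}}$ and $r|_{\mathsf{R}^c}=r''_{\mathsf{R}}$.
   Context: Permutations in one-line notation; $\mathrm{st}$ standardizes sequences of distinct integers. For $\sigma\in\mathfrak{S}_p,\tau\in\mathfrak{S}_q$, $\sigma\vee\tau=(\sigma(1)+q,..,\sigma(p)+q,p+q+1,\tau(1),..,\tau(q))$. Trees: $\mathcal{Y}_n$ = rooted planar binary trees with $n$ internal nodes, $\mathcal{Y}_0=\{|\}$; $s\vee t$ = root with left subtree $s$, right subtree $t$; $|\backslash t=t$, $s\backslash t=s_l\vee(s_r\backslash t)$. $\lambda(\mathrm{id}_0)=|$, $\lambda(\sigma)=\lambda(\mathrm{st}(\sigma(1..j-1)))\vee\lambda(\mathrm{st}(\sigma(j+1..n)))$ where $j=\sigma^{-1}(n)$; $\gamma(|)=\mathrm{id}_0$, $\gamma(t)=\gamma(t_l)\vee\gamma(t_r)$. For $\mathsf{R}=\{R_1<..<R_p\}\subseteq[n]$: $\rho|_{\mathsf{R}}=\mathrm{st}(\rho(R_1),..,\rho(R_p))$ and $r|_{\mathsf{R}}=\lambda(\gamma(r)|_{\mathsf{R}})$; $\mathsf{R}^c=[n]\setminus\mathsf{R}$. In-order labeling: if $r=s\vee t$ with $s\in\mathcal{Y}_{j-1}$, the root is labeled $j$, nodes of $s$ keep their labels, nodes of $t$ get their labels increased by $j$. $\mathsf{R}$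 is admissible if for each $x\in\mathsf{R}$ the left child of $x$ and all its internal descendants lie in $\mathsf{R}$. Pruning: cut every edge joining a node of $\mathsf{R}$ to a node not in $\mathsf{R}$; the pieces containing nodes of $\mathsf{R}$ are planar binary trees $r_1,..,r_p$ ordered left to right by the positions of their leaves, and $r'_{\mathsf{R}}=r_1\backslash\cdots\backslash r_p$; the remaining pieces are assembled into $r''_{\mathsf{R}}$ by grafting each piece onto the leaf, of the piece immediately below it, that lies below its root. Equivalently, recursively: $|'=|''=|$; for $r=s\vee t$, $\mathsf{S}=\mathsf{R}\cap s$, $\mathsf{T}=\mathsf{R}\cap t$: if the root is in $\mathsf{R}$, $r'_{\mathsf{R}}=s\vee t'_{\mathsf{T}}$, $r''_{\mathsf{R}}=t''_{\mathsf{T}}$; otherwise $r'_{\mathsf{R}}=s'_{\mathsf{S}}\backslash t'_{\mathsf{T}}$, $r''_{\mathsf{R}}=s''_{\mathsf{S}}\vee t''_{\mathsf{T}}$. *)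

From mathcomp Require Import all_boot.
Set Implicit Arguments. Unset Strict Implicit. Unset Printing Implicit Defensive.

(* Permutations in one-line notation: seq nat with values 1..n. *)

Definition st (s : seq nat) : seq nat :=
  [seq (count (fun y => y < x) s).+1 | x <- s].

Definition perm_vee (sigma tau : seq nat) : seq nat :=
  [seq x + size tau | x <- sigma] ++ (size sigma + size tau).+1 :: tau.

(* Rooted planar binary trees; the size is the number of internal nodes. *)
Inductive tree : Type := Leaf | Node of tree & tree.

Fixpoint nnodes (t : tree) : nat :=
  match t with Leaf => 0 | Node l r => (nnodes l + nnodes r).+1 end.

Fixpoint under (s t : tree) : tree :=
  match s with Leaf => t | Node sl sr => Node sl (under sr t) end.

Fixpoint lam_aux (k : nat) (s : seq nat) : tree :=
  match k with
  | 0 => Leaf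
  | k'.+1 =>
      if s is [::] then Leaf else
      let j := index (size s) s in   (* j-1 = sigma^{-1}(n) - 1, 0-based *)
      Node (lam_aux k' (st (take j s))) (lam_aux k' (st (drop j.+1 s)))
  end.

Definition lambda (s : seq nat) : tree := lam_aux (size s) s.

Fixpoint gamma (t : tree) : seq nat :=
  match t with Leaf => [::] | Node l r => perm_vee (gamma l) (gamma r) end.

(* rho|_R = st(rho(R_1),...,rho(R_p)), R_1 < ... < R_p, positions 1-based *)
Definition restrp (rho : seq nat) (R : seq nat) : seq nat :=
  st [seq nth 0 rho i.-1 | i <- iota 1 (size rho) & i \in R].

Definition restrt (r : tree) (R : seq nat) : tree := lambda (restrp (gamma r) R).

Definition compl (n : nat) (R : seq nat) : seq nat :=
  [seq i <- iota 1 n | i \notin R].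

(* In-order labeling of the subtree t whose labels start at o+1:
   for t = Node l r the root gets label o + nnodes l + 1, l gets labels
   o+1..o+nnodes l, r gets labels shifted by o + nnodes l + 1. *)

Fixpoint admissible_aux (R : seq nat) (o : nat) (t : tree) : bool :=
  match t with
  | Leaf => true
  | Node l r =>
      let x := o + nnodes l + 1 in
      [&& (x \in R) ==> all (fun y => y \in R) (iota o.+1 (nnodes l)),
          admissible_aux R o l & admissible_aux R x r]
  end.

Definition admissible (r : tree) (R : seq nat) : bool := admissible_aux R 0 r.

Fixpoint prune1_aux (R : seq nat) (o : nat) (t : tree) : tree :=
  match t with
  | Leaf => Leaf
  | Node l r =>
      let x := o + nnodes l + 1 in
      if x \in R then Node l (prune1_aux R x r)
      else under (prune1_aux R o l) (prune1_aux R x r)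
  end.

Fixpoint prune2_aux (R : seq nat) (o : nat) (t : tree) : tree :=
  match t with
  | Leaf => Leaf
  | Node l r =>
      let x := o + nnodes l + 1 in
      if x \in R then prune2_aux R x r
      else Node (prune2_aux R o l) (prune2_aux R x r)
  end.

Definition prune1 (r : tree) (R : seq nat) : tree := prune1_aux R 0 r.
Definition prune2 (r : tree) (R : seq nat) : tree := prune2_aux R 0 r.

From mathcomp Require Import all_boot.
From mathcomp Require Import zify.

(* lambda only sees the relative order of the values: lambda (st u) is the
   decreasing tree of u, whose root is the maximum of u and whose subtrees are
   the decreasing trees of the subwords left and right of it.  Restricting
   gamma r to a set of in-order positions thus gives the decreasing tree of a
   subword of gamma (l \/ r') = (gamma l + q) (p+q+1) (gamma r').  By induction
   on r: if the root is kept, admissibility keeps all of gamma l, whose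
   decreasing tree is l; if it is dropped, every kept value coming from l
   exceeds every kept value coming from r', and the decreasing tree of such a
   concatenation is the grafting s \ t.  The complement behaves dually. *)

Fixpoint decr_tree_rec (k : nat) (s : seq nat) : tree :=
  match k with
  | 0 => Leaf
  | k'.+1 =>
      if s is [::] then Leaf else
      let j := index (\max_(x <- s) x) s in
      Node (decr_tree_rec k' (take j s)) (decr_tree_rec k' (drop j.+1 s))
  end.

Definition decr_tree (s : seq nat) : tree := decr_tree_rec (size s) s.

Lemma bigmax_mem (s : seq nat) : s != [::] -> \max_(x <- s) x \in s.
Proof.
elim: s => // y [|z s] IH _; first by rewrite big_seq1 mem_head.
rewrite big_cons in_cons /maxn; case: ltnP => _; last by rewrite eqxx.
by rewrite IH ?orbT.
Qed.

Lemma split_first_max s : s != [::] ->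
  exists A M B, [/\ s = A ++ M :: B, {in A, forall x, x < M} & {in B, forall x, x <= M}].
Proof.
move=> /bigmax_mem; set M := \max_(x <- s) x => Ms.
exists (take (index M s) s), M, (drop (index M s).+1 s); split.
- by rewrite -drop_index // cat_take_drop.
- move=> x xA; rewrite ltn_neqAle leq_bigmax_seq ?(mem_take xA) // andbT.
  by apply: contraTneq xA => ->; rewrite in_take // ltnn.
- by move=> x /mem_drop xs; apply: leq_bigmax_seq.
Qed.

Lemma decr_tree_recS k s (j := index (\max_(x <- s) x) s) : s != [::] ->
  decr_tree_rec k.+1 s = Node (decr_tree_rec k (take j s)) (decr_tree_rec k (drop j.+1 s)).
Proof. by case: s @j. Qed.

Lemma decr_tree_rec_fuel k1 k2 s :
  size s <= k1 -> size s <= k2 -> decr_tree_rec k1 s = decr_tree_rec k2 s.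
Proof.
elim: k1 k2 s => [|k1 IH] [|k2] s; try by case: s.
case: (eqVneq s [::]) => [-> // | s0 le1 le2].
have lt_j : index (\max_(x <- s) x) s < size s by rewrite index_mem bigmax_mem.
rewrite !decr_tree_recS //; congr Node; apply: IH;
  rewrite ?size_take ?size_drop ?lt_j; lia.
Qed.

Lemma decr_treeE s (j := index (\max_(x <- s) x) s) : s != [::] ->
  decr_tree s = Node (decr_tree (take j s)) (decr_tree (drop j.+1 s)).
Proof.
move=> s0; have lt_j : j < size s by rewrite index_mem bigmax_mem.
have [k size_s] : exists k, size s = k.+1 by case: (size s) lt_j => // k; exists k.
rewrite {1}/decr_tree size_s decr_tree_recS //; congr Node; apply: decr_tree_rec_fuel;
  rewrite ?size_take ?size_drop ?lt_j; lia.
Qed.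

Lemma drop_pivot (T : eqType) (x : T) s1 s2 (s := s1 ++ x :: s2) : x \notin s1 ->
  drop (index x s).+1 s = s2.
Proof. by move=> /index_pivot->; rewrite -addn1 addnC -drop_drop drop_size_cat //= drop0. Qed.

Lemma decr_tree_pivot A M B :
  {in A, forall x, x < M} -> {in B, forall x, x <= M} ->
  decr_tree (A ++ M :: B) = Node (decr_tree A) (decr_tree B).
Proof.
move=> ltAM leBM; have MA : M \notin A by apply/negP => /ltAM; rewrite ltnn.
have maxM : \max_(x <- A ++ M :: B) x = M.
  apply/eqP; rewrite eqn_leq leq_bigmax_seq ?mem_cat ?mem_head ?orbT // andbT.
  apply/bigmax_leqP_seq => x; rewrite mem_cat in_cons => /or3P[/ltAM/ltnW|/eqP->|/leBM] //.
rewrite decr_treeE; last by case: A {ltAM MA maxM}.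
by rewrite maxM take_pivot // drop_pivot.
Qed.

Lemma decr_tree_map_mono f s : {in s &, {mono f : x y / x <= y}} ->
  decr_tree (map f s) = decr_tree s.
Proof.
have [k] := ubnP (size s); elim: k s => // k IH s /ltnSE le_s_k mono_f.
case: (eqVneq s [::]) => [-> // | /split_first_max[A [M [B [def_s ltA leB]]]]].
subst s; have sub_A : {subset A <= A ++ M :: B} by move=> x xA; rewrite mem_cat xA.
have sub_B : {subset B <= A ++ M :: B} by move=> x xB; rewrite mem_cat in_cons xB !orbT.
have sMs : M \in A ++ M :: B by rewrite mem_cat mem_head orbT.
have [lt_A_k lt_B_k] : size A < k /\ size B < k.
  by move: le_s_k; rewrite size_cat /=; lia.
rewrite map_cat /= !decr_tree_pivot ?(IH A) ?(IH B) //; try exact: sub_in2 mono_f.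
- by move=> _ /mapP[x xA ->]; rewrite (leqW_mono_in mono_f (sub_A _ xA) sMs) ltA.
- by move=> _ /mapP[x xB ->]; rewrite (mono_f _ _ (sub_B _ xB) sMs) leB.
Qed.

Lemma decr_tree_cat A B : {in A & B, forall a b, b < a} ->
  decr_tree (A ++ B) = under (decr_tree A) (decr_tree B).
Proof.
have [k] := ubnP (size A); elim: k A => // k IH A /ltnSE le_A_k gtAB.
case: (eqVneq A [::]) => [-> // | /split_first_max[A1 [M [A2 [def_A ltA1 leA2]]]]].
subst A; have MA : M \in A1 ++ M :: A2 by rewrite mem_cat mem_head orbT.
have sub_A2 : {subset A2 <= A1 ++ M :: A2} by move=> x xA2; rewrite mem_cat in_cons xA2 !orbT.
rewrite -catA cat_cons !decr_tree_pivot //= ?IH //.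
- by move: le_A_k; rewrite size_cat /=; lia.
- by move=> a b /sub_A2 aA; apply: gtAB.
- by move=> x; rewrite mem_cat => /orP[/leA2 // | xB]; rewrite ltnW // gtAB.
Qed.

Definition rank (s : seq nat) (x : nat) : nat := (count (fun y => y < x) s).+1.

Lemma stE s : st s = map (rank s) s. Proof. by []. Qed.

Lemma rank_mono s : {in s &, {mono rank s : x y / x <= y}}.
Proof.
apply: leq_mono_in => x y xs _ lt_xy; rewrite /rank ltnS.
elim: s xs => //= z s IH; rewrite in_cons => /predU1P[<- | /IH].
  by rewrite ltnn lt_xy add1n ltnS sub_count // => w /= wx; apply: ltn_trans wx lt_xy.
by case: ltnP => zx; case: ltnP => zy //=; lia.
Qed.

Lemma st_map_mono f s : {in s &, {mono f : x y / x < y}} -> st (map f s) = st s.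
Proof.
move=> mono_f; rewrite /st -map_comp; apply/eq_in_map => x xs /=; congr S.
by rewrite count_map; apply: eq_in_count => y ys /=; apply: mono_f.
Qed.

Lemma rank_pivot A M B : uniq (A ++ M :: B) -> {in A ++ B, forall x, x <= M} ->
  rank (A ++ M :: B) M = size (A ++ M :: B).
Proof.
move=> uniq_s leM; have MAB : M \notin A ++ B.
  by move: uniq_s; rewrite uniq_catC /= mem_cat orbC -mem_cat => /andP[].
have ltM : {in A ++ B, forall x, x < M}.
  move=> x xAB; rewrite ltn_neqAle leM // andbT.
  by apply/eqP => xM; rewrite -xM xAB in MAB.
rewrite /rank count_cat /= ltnn add0n -count_cat !size_cat /= addnS.
by congr S; rewrite -size_cat -count_predT; apply: eq_in_count => x /ltM.
Qed.

Lemma lam_auxS k s (j := index (size s) s) : s != [::] ->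
  lam_aux k.+1 s = Node (lam_aux k (st (take j s))) (lam_aux k (st (drop j.+1 s))).
Proof. by case: s @j. Qed.

Lemma lam_aux_st k u : uniq u -> size u <= k -> lam_aux k (st u) = decr_tree u.
Proof.
elim: k u => [|k IH] u uniq_u le_u_k; first by case: u uniq_u le_u_k.
case: (eqVneq u [::]) => [-> // | /split_first_max[A [M [B [def_u ltA leB]]]]].
subst u; set u := A ++ M :: B.
have sub_A : {subset A <= u} by move=> x xA; rewrite mem_cat xA.
have sub_B : {subset B <= u} by move=> x xB; rewrite mem_cat in_cons xB !orbT.
have Mu : M \in u by rewrite mem_cat mem_head orbT.
have leM : {in A ++ B, forall x, x <= M}.
  by move=> x; rewrite mem_cat => /orP[/ltA/ltnW | /leB].
have mono_r := leqW_mono_in (@rank_mono u).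
have rM : rank u M \notin map (rank u) A.
  apply/mapP => -[x xA /(incn_inj_in (@rank_mono u) Mu (sub_A _ xA)) Mx].
  by have := ltA _ xA; rewrite -Mx ltnn.
have [uniq_A uniq_B] : uniq A /\ uniq B.
  by move: uniq_u; rewrite cat_uniq /= => /and4P[-> _ _ ->].
rewrite decr_tree_pivot // lam_auxS; last by rewrite -size_eq0 size_map size_cat /= addnS.
rewrite [size (st u)]size_map -(rank_pivot _ _ _ uniq_u leM) (stE u) map_cat /=.
have [le_A_k le_B_k] : size A <= k /\ size B <= k.
  by move: le_u_k; rewrite size_cat /=; lia.
by rewrite take_pivot // drop_pivot // !st_map_mono ?IH //; exact: sub_in2 mono_r.
Qed.

Lemma lambda_st u : uniq u -> lambda (st u) = decr_tree u.
Proof. by move=> uniq_u; rewrite /lambda size_map lam_aux_st. Qed.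

Lemma size_gamma t : size (gamma t) = nnodes t.
Proof. by elim: t => //= l IHl r IHr; rewrite size_cat size_map /= IHl IHr addnS. Qed.

Lemma gamma_bound t x : x \in gamma t -> 0 < x <= nnodes t.
Proof.
elim: t x => //= l IHl r IHr x; rewrite mem_cat in_cons !size_gamma.
by case/or3P => [/mapP[y /IHl + ->] | /eqP-> | /IHr]; lia.
Qed.

Lemma uniq_gamma t : uniq (gamma t).
Proof.
elim: t => //= l IHl r IHr; rewrite cat_uniq /= map_inj_uniq ?IHl ?IHr; last exact: addIn.
rewrite !size_gamma andbT /= negb_or -andbA; apply/and3P; split.
- by apply/mapP => -[y /gamma_bound y_bd]; lia.
- by apply/hasP => -[x /gamma_bound x_bd /mapP[y /gamma_bound y_bd]]; lia.
- by apply/negP => /gamma_bound; lia.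
Qed.

Lemma decr_tree_shift c s : decr_tree (map (addn^~ c) s) = decr_tree s.
Proof. by apply: decr_tree_map_mono => x y _ _; apply: leq_add2r. Qed.

Lemma decr_tree_mask_gamma m1 b m2 l r : size m1 = nnodes l ->
  decr_tree (mask (m1 ++ b :: m2) (gamma (Node l r))) =
  (if b then Node else under) (decr_tree (mask m1 (gamma l))) (decr_tree (mask m2 (gamma r))).
Proof.
move=> size_m1; rewrite /= /perm_vee !size_gamma mask_cat ?size_map ?size_gamma //.
rewrite mask_cons -map_mask -[in RHS](decr_tree_shift (nnodes r)).
have ltL : {in map (addn^~ (nnodes r)) (mask m1 (gamma l)),
    forall x, nnodes r < x < (nnodes l + nnodes r).+1}.
  by move=> _ /mapP[y /mem_mask/gamma_bound y_bd ->]; lia.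
have leR : {in mask m2 (gamma r), forall x, x <= nnodes r}.
  by move=> x /mem_mask/gamma_bound/andP[].
case: b => /=.
- rewrite decr_tree_pivot // => x; first by case/ltL/andP.
  by move/leR; lia.
- by rewrite decr_tree_cat // => x y /ltL/andP[+ _] /leR; lia.
Qed.

Lemma decr_tree_gamma t : decr_tree (gamma t) = t.
Proof.
elim: t => //= l IHl r IHr.
rewrite /perm_vee decr_tree_pivot ?decr_tree_shift ?IHl ?IHr // => x.
  by case/mapP => y /gamma_bound; rewrite !size_gamma; lia.
by move=> /gamma_bound; rewrite !size_gamma; lia.
Qed.

Definition label_mask (R : seq nat) (o n : nat) : bitseq := [seq i \in R | i <- iota o.+1 n].

Lemma label_mask_node R o nl nr : label_mask R o (nl + nr).+1 =
  label_mask R o nl ++ (o + nl + 1 \in R) :: label_mask R (o + nl + 1) nr.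
Proof. by rewrite /label_mask -addnS iotaD map_cat addn1 -addSn. Qed.

Lemma label_mask_all R o n : all (mem R) (iota o.+1 n) -> label_mask R o n = nseq n true.
Proof.
rewrite /label_mask -[n in RHS](size_iota o.+1); elim: (iota _ _) => //= i s IH.
by case/andP=> -> /IH->.
Qed.

Lemma decr_tree_mask_prune R o t : admissible_aux R o t ->
  decr_tree (mask (label_mask R o (nnodes t)) (gamma t)) = prune1_aux R o t /\
  decr_tree (mask (map negb (label_mask R o (nnodes t))) (gamma t)) = prune2_aux R o t.
Proof.
elim: t o => [|l IHl r IHr] o //.
rewrite [admissible_aux _ _ _]/= [prune1_aux _ _ _]/= [prune2_aux _ _ _]/= [nnodes _]/=.
case/and3P => adm_x /IHl[IH1l IH2l] /IHr[IH1r IH2r].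
rewrite label_mask_node map_cat /= !decr_tree_mask_gamma ?size_map ?size_iota //.
case: ifP => xR; last by rewrite IH1l IH1r IH2l IH2r.
rewrite label_mask_all ?(implyP adm_x) // map_nseq mask_false mask_true ?size_gamma //.
by rewrite decr_tree_gamma IH1r IH2r.
Qed.

Lemma restrp_mask g R : restrp g R = st (mask (label_mask R 0 (size g)) g).
Proof.
rewrite /restrp filter_mask map_mask; congr (st (mask _ _)).
by rewrite -[in RHS](mkseq_nth 0 g) /mkseq -[1]/(1 + 0) iotaDl -map_comp.
Qed.

Lemma restrt_mask r R :
  restrt r R = decr_tree (mask (label_mask R 0 (nnodes r)) (gamma r)).
Proof. by rewrite /restrt restrp_mask size_gamma lambda_st // mask_uniq ?uniq_gamma. Qed.

Lemma label_mask_compl n R : label_mask (compl n R) 0 n = map negb (label_mask R 0 n).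
Proof. by rewrite -map_comp; apply/eq_in_map => i i_n; rewrite /= mem_filter i_n andbT. Qed.

Theorem lemma8p9 (n : nat) (r : tree) (R : seq nat) :
  nnodes r = n -> {subset R <= iota 1 n} -> admissible r R ->
  restrt r R = prune1 r R /\ restrt r (compl n R) = prune2 r R.
Proof.
(* The labels of R outside 1..n are never read by the masks. *)
move=> <- _ /decr_tree_mask_prune[pruned1 pruned2].
by rewrite !restrt_mask label_mask_compl.
Qed.
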